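(* Let $k$ be a field, $e, h \geq 1$ integers, and $M$ a finite-dimensional $k[T]/T^e$-module generated by at most $h$ elements. For $1 \leq i \leq e$ let $\delta_i := \dim_k M[T^i]/M[T^{i-1}]$ (so $\delta_1 \geq \dots \geq \delta_e$). Then $\mathrm{Hdg}(M) = P(\delta_1, \dots, \delta_e)$.
   Context: $M[T^i]$ denotes the kernel of multiplication by $T^i$ on $M$. For integers $d_1,\dots,d_N \in [0,h]$, $P(d_1,\dots,d_N)$ is the function on $[0,h]$ given by $x \mapsto \frac{1}{N}\sum_{i=1}^N \max(0, x+d_i-h)$. Writing $M \simeq \bigoplus_{i=1}^h k[T]/T^{a_i}$ with integers $0 \leq a_i \leq e$, the Hodge polygon $\mathrm{Hdg}(M)$ is the convex polygon on $[0,h]$ starting at the origin whose slopes are $\frac{a_1}{e}, \dots, \frac{a_h}{e}$ (each on an interval of length $1$, arranged in increasing order). *)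

From HB Require Import structures.
From mathcomp Require Import all_boot all_order all_algebra.
Set Implicit Arguments. Unset Strict Implicit. Unset Printing Implicit Defensive.
Import Order.TTheory GRing.Theory Num.Theory.
Local Open Scope ring_scope.

Definition lpow (k : fieldType) (M : vectType k) (T : 'End(M)) (i : nat) : 'End(M) :=
  iter i (fun f => (T \o f)%VF) \1%VF.

Definition Mker (k : fieldType) (M : vectType k) (T : 'End(M)) (i : nat) : {vspace M} :=
  lker (lpow T i).

(* delta_i = dim_k M[T^i] / M[T^(i-1)] = dim M[T^i] - dim M[T^(i-1)] *)
Definition delta (k : fieldType) (M : vectType k) (T : 'End(M)) (i : nat) : nat :=
  (\dim (Mker T i) - \dim (Mker T i.-1))%N.

(* M is generated, as a k[T]-module, by at most h elements
   (T^e = 0, so the T^j g with j < e span the submodule generated by g). *)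
Definition gen_by_at_most (k : fieldType) (M : vectType k) (T : 'End(M)) (e h : nat) : Prop :=
  exists g : seq M, (size g <= h)%N /\
    <<[seq lpow T j x | x <- g, j <- iota 0 e]>>%VS = fullv.

(* M = (+)_{i<h} k[T] v_i with k[T] v_i ~ k[T]/T^(a_i): i.e. the vectors
   T^j v_i (j < a_i) form a k-basis of M and T^(a_i) v_i = 0. *)
Definition cyclic_decomp (k : fieldType) (M : vectType k) (T : 'End(M)) (h : nat)
    (a : 'I_h -> nat) (v : 'I_h -> M) : Prop :=
  (forall i, lpow T (a i) (v i) = 0) /\
  basis_of fullv [seq lpow T j (v i) | i <- enum 'I_h, j <- iota 0 (a i)].

Definition clamp01 (R : realFieldType) (y : R) : R := Num.min 1 (Num.max 0 y).

(* Hodge polygon on [0,h] of exponents as (list of length h):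
   convex polygon from the origin with slopes a_(j)/e (sorted increasingly),
   slope number j (0-based) on the interval [j, j+1]. *)
Definition Hdg (R : realFieldType) (e : nat) (as_ : seq nat) (x : R) : R :=
  let s := sort leq as_ in
  \sum_(j < size s) ((nth 0%N s j)%:R / e%:R) * clamp01 (x - j%:R).

Definition Ppoly (R : realFieldType) (h : nat) (d : seq nat) (x : R) : R :=
  (size d)%:R^-1 * \sum_(di <- d) Num.max 0 (x + di%:R - h%:R).

From HB Require Import structures.
From mathcomp Require Import all_boot all_order all_algebra.
From mathcomp Require Import zify ring lra.
Import Order.TTheory GRing.Theory Num.Theory.
Local Open Scope ring_scope.

(* Write M as the direct sum of the k[T]/T^(a_l). The image of T^i is spanned
   by the free family of the T^j v_l with i <= j < a_l, so rank-nullity gives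
   dim M[T^i] = sum_l min(a_l, i), hence delta_i = #{l | i <= a_l}.
   On the polygon side, split each slope a_l/e as sum_(i=1..e) [i <= a_l]/e:
   Hdg(M) is then the average over the layers i of the convex polygon with
   h - delta_i slopes 0 followed by delta_i slopes 1, which is exactly
   x |-> max(0, x + delta_i - h). *)

Lemma lpowE (k : fieldType) (M : vectType k) (T : 'End(M)) n x :
  lpow T n x = iter n T x.
Proof.
elim: n => [|n IH]; first by rewrite /lpow /= id_lfunE.
by rewrite /lpow /= comp_lfunE -/(lpow T n) IH.
Qed.

Lemma lpowD (k : fieldType) (M : vectType k) (T : 'End(M)) m n x :
  lpow T (m + n) x = lpow T m (lpow T n x).
Proof. by rewrite !lpowE iterD. Qed.

Section CyclicDecomposition.
Context {k : fieldType} {M : vectType k} {T : 'End(M)} {h : nat}.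
Context {a : 'I_h -> nat} {v : 'I_h -> M}.
Hypothesis decT : cyclic_decomp T a v.

Definition tail_family (i : nat) : seq M :=
  [seq lpow T j (v l) | l <- enum 'I_h, j <- iota i (a l - i)].

Lemma lpow_cyclic_eq0 l j : (a l <= j)%N -> lpow T j (v l) = 0.
Proof.
move=> le_al_j; rewrite -(subnK le_al_j) lpowD.
by case: decT => -> _; rewrite linear0.
Qed.

Lemma free_tail_family i : free (tail_family i).
Proof.
case: decT => _ /andP[_]; set B := [seq _ | l <- _, j <- _] => freeB.
suff /perm_free free_catE : perm_eq
    ([seq lpow T j (v l) | l <- enum 'I_h, j <- iota 0 (minn i (a l))]
       ++ tail_family i) B.
  by move: freeB; rewrite -free_catE; exact: catr_free.
rewrite /B -perm_allpairs_catr; apply/perm_allpairs_dep => // l _.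
by rewrite -take_iota [iota i _](_ : _ = drop i (iota 0 (a l))) ?cat_take_drop // drop_iota.
Qed.

Lemma limg_lpow i : (lpow T i @: fullv)%VS = <<tail_family i>>%VS.
Proof.
case: decT => _ /andP[/eqP spanB _]; rewrite -spanB limg_span.
apply/eqP; rewrite eqEsubv; apply/andP; split; apply/span_subvP => y.
  case/mapP => z /allpairsPdep[l [j [_ _ ->]]] ->.
  rewrite -lpowD; have [lt_ij_al | le_al_ij] := ltnP (i + j) (a l).
    apply: memv_span; apply/allpairsPdep; exists l, (i + j)%N.
    by rewrite mem_enum mem_iota; split => //; lia.
  by rewrite lpow_cyclic_eq0 // mem0v.
case/allpairsPdep => l [j [_ /[!mem_iota] /andP[le_ij lt_j_al] ->]].
apply: memv_span; apply/mapP; exists (lpow T (j - i)%N (v l)); last first.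
  by rewrite -lpowD subnKC.
by apply/allpairsPdep; exists l, (j - i)%N; rewrite mem_enum mem_iota; split => //; lia.
Qed.

Lemma dim_fullv_cyclic : \dim (fullv : {vspace M}) = (\sum_(l < h) a l)%N.
Proof.
case: decT => _ /andP[/eqP <- /eqP ->].
by rewrite size_allpairs_dep sumnE big_map big_enum; apply: eq_bigr => l _; rewrite size_iota.
Qed.

Lemma dim_tail_family i : \dim <<tail_family i>> = (\sum_(l < h) (a l - i))%N.
Proof.
rewrite (eqP (free_tail_family i)) size_allpairs_dep sumnE big_map big_enum.
by apply: eq_bigr => l _; rewrite size_iota.
Qed.

Lemma dim_Mker i : \dim (Mker T i) = (\sum_(l < h) minn (a l) i)%N.
Proof.
have := limg_ker_dim (lpow T i) fullv.
rewrite capfv limg_lpow dim_tail_family dim_fullv_cyclic /Mker.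
have -> : (\sum_(l < h) a l = \sum_(l < h) minn (a l) i + \sum_(l < h) (a l - i))%N.
  by rewrite -big_split; apply: eq_bigr => l _ /=; lia.
by move/addIn.
Qed.

Lemma delta_cyclic i : (0 < i)%N ->
  delta T i = count (leq i) [seq a l | l <- enum 'I_h].
Proof.
move=> i_gt0; rewrite /delta !dim_Mker -sum1_count big_map big_enum_cond /=.
have -> : (\sum_(l < h) minn (a l) i
           = \sum_(l < h) minn (a l) i.-1 + \sum_(l < h | i <= a l) 1)%N.
  by rewrite [X in (_ + X)%N]big_mkcond -big_split; apply: eq_bigr => l _ /=; case: leqP; lia.
by rewrite addKn.
Qed.

End CyclicDecomposition.

Section HodgeLayers.
Variable R : realFieldType.

Lemma max0_clamp01 (x : R) : Num.max 0 x = Num.max 0 (x - 1) + clamp01 x.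
Proof.
rewrite /clamp01.
case: (lerP 0 x) => ?; case: (lerP 0 (x - 1)) => ?; case: (lerP 1 x) => ?; try lra.
all: by case: (lerP 1 (0 : R)) => ?; lra.
Qed.

Lemma count_iota_leq (e y : nat) : (y <= e)%N -> count (leq^~ y) (iota 1 e) = y.
Proof.
move=> le_ye; rewrite -(subnKC le_ye) iotaD count_cat.
rewrite (@eq_in_count _ _ predT (iota 1 y)) => [|i]; last by rewrite mem_iota /=; lia.
rewrite (@eq_in_count _ _ pred0 (iota (1 + y) _)) => [|i]; last by rewrite mem_iota /=; lia.
by rewrite count_predT size_iota count_pred0 addn0.
Qed.

Lemma hodge_sum_layers (e : nat) (s : seq nat) (x : R) :
  sorted leq s -> all (leq^~ e) s -> x <= (size s)%:R ->
  \sum_(j < size s) (nth 0%N s j)%:R * clamp01 (x - j%:R)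
  = \sum_(i <- iota 1 e) Num.max 0 (x + (count (leq i) s)%:R - (size s)%:R).
Proof.
elim: s x => [|y s IH] x sorted_s /= + x_le.
  move=> _; rewrite big_ord0 big1_seq // => i _.
  by rewrite addr0 subr0; apply/max_idPl.
case/andP=> le_ye le_se; rewrite big_ord_recl /= subr0.
under eq_bigr => j _ do rewrite /bump add1n mulrSr opprD addrA addrAC.
rewrite IH ?(path_sorted sorted_s) //; last by move: x_le; rewrite mulrSr; lra.
have y_min : all (leq y) s := order_path_min leq_trans sorted_s.
rewrite -[y in y%:R * _](count_iota_leq _ _ le_ye) -sum1_count big_mkcond natr_sum.
rewrite mulr_suml -big_split; apply: eq_big_seq => i _ /=.
have [le_iy | lt_yi] := leqP i y.
  have -> : count (leq i) s = size s.
    by apply/eqP; rewrite -all_count; apply/allP => z /(allP y_min); exact: leq_trans.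
  by rewrite mul1r add1n !addrK (max0_clamp01 x) addrC.
by rewrite mul0r add0r add0n mulrSr; congr (Num.max 0 _); ring.
Qed.

Lemma Hdg_layers (e : nat) (s : seq nat) (x : R) :
  all (leq^~ e) s -> x <= (size s)%:R ->
  Hdg e s x
  = e%:R^-1 * \sum_(i <- iota 1 e) Num.max 0 (x + (count (leq i) s)%:R - (size s)%:R).
Proof.
move=> le_se x_le; under eq_big_seq => i _ do rewrite -(count_sort leq (leq i) s).
rewrite -(size_sort leq) -hodge_sum_layers ?sort_sorted ?all_sort //; last by rewrite size_sort.
by rewrite /Hdg mulr_sumr; apply: eq_bigr => j _; rewrite mulrCA mulrA.
Qed.

End HodgeLayers.

Theorem mainTheorem3 (k : fieldType) (M : vectType k) (T : 'End(M)) (e h : nat) :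
  (1 <= e)%N -> (1 <= h)%N ->
  lpow T e = 0 ->
  gen_by_at_most T e h ->
  forall (a : 'I_h -> nat) (v : 'I_h -> M),
    (forall i, (a i <= e)%N) ->
    cyclic_decomp T a v ->
  forall (R : realFieldType) (x : R), 0 <= x <= h%:R ->
    Hdg e [seq a i | i <- enum 'I_h] x
    = Ppoly h [seq delta T i | i <- iota 1 e] x.
Proof.
(* T^e = 0 and generation by h elements follow from the cyclic decomposition
   with a_i <= e, and the identity holds for every x <= h. *)
move=> _ _ _ _ a v le_ae decT R x /andP[_ le_xh].
have size_a : size [seq a i | i <- enum 'I_h] = h by rewrite size_map size_enum_ord.
rewrite Hdg_layers ?size_a //; last by apply/allP => _ /mapP[l _ ->].
rewrite /Ppoly size_map size_iota big_map; congr (_ * _).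
by apply: eq_big_seq => i /[!mem_iota] /andP[i_gt0 _]; rewrite (delta_cyclic decT).
Qed.
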